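(* For each $x_{k-1}$, $$-\ln\int_{\mathcal{U}}q(u_k\mid x_{k-1})\exp\Big(-D_{KL}\big(\bar p(\cdot\mid x_{k-1},u_k)\|q(\cdot\mid x_{k-1},u_k)\big)-\mathbb{E}_{\bar p(\cdot\mid x_{k-1},u_k)}[\bar c(X_k)]-c^{(u)}_k(u_k)\Big)du_k$$ $$<-\ln\int_{\mathcal{U}}q(u_k\mid x_{k-1})\exp\Big(-\eta_k(x_{k-1},u_k)-\tilde c(x_{k-1},u_k)-c^{(u)}_k(u_k)\Big)du_k,$$ where $\tilde c(x_{k-1},u_k)=\min_{\alpha\ge0}\tilde V_\alpha(x_{k-1},u_k)$ with $\tilde V_0=M(x_{k-1},u_k):=\limsup_{x_k\in\mathrm{supp}\,\bar p(\cdot\mid x_{k-1},u_k)}\ln\big(\bar p(x_k\mid x_{k-1},u_k)e^{\bar c(x_k)}/q(x_k\mid x_{k-1},u_k)\big)$ and, for $\alpha>0$, $\tilde V_\alpha(x_{k-1},u_k)=\alpha\ln\mathbb{E}_{\bar p(\cdot\mid x_{k-1},u_k)}\big[\big(\bar p(X_k\mid x_{k-1},u_k)e^{\bar c(X_k)}/q(X_k\mid x_{k-1},u_k)\big)^{1/\alpha}\big]+\alpha\eta_k(x_{k-1},u_k)$. (That is, an agent affected by ambiguity cannot achieve a lower cost than the optimal cost of an ambiguity-free agent.)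
   Context: State space $\mathcal{X}\subseteq\mathbb{K}^n$, action space $\mathcal{U}\subseteq\mathbb{K}^p$, $\mathbb{K}\in\{\mathbb{R},\mathbb{Z}\}$ (pdfs or pmfs); $D_{KL}(p\|q)=\int p\ln(p/q)$. $q(u_k\mid x_{k-1})$ is a reference policy; $\bar p(x_k\mid x_{k-1},u_k)$ a nominal model; $q(x_k\mid x_{k-1},u_k)$ a bounded generative model with $\mathrm{supp}\,\bar p\subseteq\mathrm{supp}\,q$; $\eta_k(x_{k-1},u_k)>0$ an ambiguity radius uniformly bounded by a finite constant; $\bar c:\mathcal{X}\to\mathbb{R}$ non-negative and bounded; $c^{(u)}_k:\mathcal{U}\to\mathbb{R}$ a non-negative, lower bounded action cost. *)

From HB Require Import structures.
From mathcomp Require Import all_boot all_order all_algebra.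
From mathcomp Require Import all_classical all_reals all_analysis measurable_realfun.
Set Implicit Arguments. Unset Strict Implicit. Unset Printing Implicit Defensive.
Import Order.TTheory GRing.Theory Num.Theory.
Local Open Scope classical_set_scope.
Local Open Scope ring_scope.

Section Defs.
Context {R : realType} {d : measure_display} {T : measurableType d}.
Variable mu : {measure set T -> \bar R}.

(* p is a probability density (pdf, or pmf when mu is counting) w.r.t. mu *)
Definition is_density (p : T -> R) : Prop :=
  [/\ (forall y, 0 <= p y), measurable_fun setT p & (\int[mu]_y (p y)%:E = 1)%E].

Definition supp (p : T -> R) : set T := [set y | 0 < p y].

(* Kullback-Leibler divergence D_KL(p || q) = int p ln (p/q)  (0 ln 0 = 0) *)
Definition KL (p q : T -> R) : \bar R := (\int[mu]_y (p y * ln (p y / q y))%:E)%E.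

Definition expect (p : T -> R) (g : T -> R) : \bar R := (\int[mu]_y (p y * g y)%:E)%E.

Definition ratio (p q c : T -> R) (y : T) : R := p y * expR (c y) / q y.

Definition Vtilde (p q c : T -> R) (eta : R) (alpha : R) : \bar R :=
  if alpha == 0 then ereal_sup [set (ln (ratio p q c y))%:E | y in supp p]
  else (alpha%:E * lne (expect p (fun y => ((ratio p q c y) `^ (alpha^-1))%R))
        + (alpha * eta)%:E)%E.

Definition is_min_Vtilde (p q c : T -> R) (eta : R) (x : R) : Prop :=
  (exists2 a, 0 <= a & Vtilde p q c eta a = x%:E) /\
  (forall a, 0 <= a -> (x%:E <= Vtilde p q c eta a)%E).
End Defs.

From Pilot Require Import Defs.
From HB Require Import structures.
From mathcomp Require Import all_boot all_order all_algebra.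
From mathcomp Require Import all_classical all_reals all_analysis measurable_realfun.
From mathcomp Require Import lra.
Set Implicit Arguments. Unset Strict Implicit. Unset Printing Implicit Defensive.
Import Order.TTheory GRing.Theory Num.Theory.
Local Open Scope classical_set_scope.
Local Open Scope ring_scope.

(* Write r = pbar e^cbar / q.  Since pbar ln r = pbar ln (pbar / q) + pbar cbar, any
   integrable g with pbar ln r <= g pointwise gives KL + E[cbar] <= \int g.  For alpha = 0
   take g = M pbar; for alpha > 0 take g = alpha ((ln z - 1) pbar + pbar r^(1/alpha) / z)
   with z = E[r^(1/alpha)], which dominates pbar ln r by ln w <= w - 1 at
   w = r^(1/alpha) / z and integrates to alpha ln z.  Hence KL + E[cbar] <= ctilde
   < eta + ctilde, so the nominal integrand strictly exceeds the ambiguity-averse one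
   wherever q(u) > 0; integrating against the density q gives a strict inequality, which
   -ln reverses. *)

Lemma ln_le_subr1 {R : realType} (x : R) : 0 < x -> ln x <= x - 1.
Proof. by move=> x0; have := expR_ge1Dx (ln x); rewrite lnK ?posrE //; lra. Qed.

Lemma subr_le_mul_ln_div {R : realType} (x y : R) :
  0 <= x -> 0 <= y -> (0 < x -> 0 < y) -> x - y <= x * ln (x / y).
Proof.
rewrite le0r => /orP[/eqP -> y0 _|x0 _ /(_ x0) y0].
  by rewrite mul0r sub0r oppr_le0.
have := @ln_le_subr1 _ _ (divr_gt0 y0 x0).
rewrite -[x / y]invf_div lnV ?posrE ?divr_gt0 //.
have : x * (y / x) = y by rewrite mulrC divfK // gt_eqF.
nra.
Qed.

Lemma ln_le_powR_div {R : realType} (a r z : R) : 0 < a -> 0 < r -> 0 < z ->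
  ln r <= a * (ln z - 1) + a / z * r `^ a^-1.
Proof.
move=> a0 r0 z0.
have w0 : 0 < r `^ a^-1 / z by rewrite divr_gt0 // powR_gt0.
have /(ler_wpM2l (ltW a0)) := @ln_le_subr1 _ _ w0.
rewrite ln_div ?posrE ?powR_gt0 // ln_powR mulrBr mulrA divff ?gt_eqF // mul1r.
by rewrite mulrAC -mulrA; lra.
Qed.

Lemma measurable_inv_ge0 {R : realType} {d : measure_display} {T : measurableType d}
    (f : T -> R) :
  (forall y, 0 <= f y) -> measurable_fun setT f -> measurable_fun setT (fun y => (f y)^-1).
Proof.
move=> f0 mf; rewrite (_ : (fun y => _) = (fun y => f y `^ (-1))); last first.
  by apply: funext => y; rewrite powR_inv1.
exact: measurableT_comp (measurable_powR _) mf.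
Qed.

Section density.
Context {R : realType} {d : measure_display} {T : measurableType d}.
Variable mu : {measure set T -> \bar R}.

Lemma density_integrable (p : T -> R) :
  is_density mu p -> mu.-integrable setT (EFin \o p).
Proof.
case=> p0 mp p1; apply/integrableP; split; first exact/measurable_EFinP.
under eq_integral do rewrite /= ger0_norm //.
by rewrite p1 ltry.
Qed.

Lemma density_integral_gt0 (p : T -> R) (h : T -> \bar R) :
  is_density mu p -> measurable_fun setT h -> (forall y, 0 <= h y)%E ->
  (forall y, 0 < p y -> (0 < h y)%E) -> (0 < \int[mu]_y h y)%E.
Proof.
move=> [p0 mp p1] mh h0 hp.
rewrite lt_neqAle integral_ge0 ?andbT //; apply/negP => /eqP/esym h_int0.
have /(ae_eq_integral_abs mu measurableT mh) h_ae0 : (\int[mu]_y `|h y| = 0)%E.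
  by under eq_integral do rewrite gee0_abs //.
have p_ae0 : ae_eq mu setT (EFin \o p) (cst 0%E).
  apply: filterS h_ae0 => y /(_ I) /= hy0 _; move: (p0 y); rewrite le0r.
  by case/orP => [/eqP -> //|/hp]; rewrite hy0 ltxx.
move: p1; rewrite (ae_eq_integral _ _ measurableT _ _ p_ae0) ?integral0 //=.
- by move=> [] /eqP; rewrite eq_sym oner_eq0.
- exact/measurable_EFinP.
Qed.

Lemma lne_integral_lt (p : T -> R) (F G : T -> \bar R) : is_density mu p ->
  measurable_fun setT F -> measurable_fun setT G ->
  (forall y, [/\ (0 <= G y)%E, (G y <= F y)%E, (F y <= (p y)%:E)%E &
               (0 < p y -> (G y < F y)%E)]) ->
  (lne (\int[mu]_y G y) < lne (\int[mu]_y F y))%E.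
Proof.
move=> dp mF mG GF_bounds.
have G0 y : (0 <= G y)%E by case: (GF_bounds y).
have GF y : (G y <= F y)%E by case: (GF_bounds y).
have Fp y : (F y <= (p y)%:E)%E by case: (GF_bounds y).
have GltF y : 0 < p y -> (G y < F y)%E by case: (GF_bounds y).
have F0 y : (0 <= F y)%E := le_trans (G0 y) (GF y).
have Gp y : (G y <= (p y)%:E)%E := le_trans (GF y) (Fp y).
have integrable_le_p (H : T -> \bar R) : measurable_fun setT H -> (forall y, 0 <= H y)%E ->
    (forall y, H y <= (p y)%:E)%E -> mu.-integrable setT H.
  move=> mH H0 Hp; apply: (le_integrable measurableT mH) (density_integrable dp) => y _.
  by rewrite gee0_abs // gee0_abs ?lee_fin; [exact: Hp | case: dp].
have iF := integrable_le_p F mF F0 Fp.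
have iG := integrable_le_p G mG G0 Gp.
have Gfin y : G y \is a fin_num.
  by rewrite ge0_fin_numE // (le_lt_trans (Gp y)) ?ltry.
have : (0 < \int[mu]_y (F y - G y))%E.
  apply: density_integral_gt0 dp (emeasurable_funB mF mG) _ _ => y.
  - by rewrite sube_ge0 ?Gfin.
  - by move=> /GltF; rewrite /= sube_gt0.
rewrite (integralB measurableT iF iG) sube_gt0 => ltGF.
rewrite lte_lne // in_itv /= leey andbT; apply: integral_ge0 => y _.
- exact: G0.
- exact: F0.
Qed.

End density.

Section KL_bound.
Context {R : realType} {d : measure_display} {T : measurableType d}.
Variables (mu : {measure set T -> \bar R}) (p q c : T -> R) (B : R).
Hypotheses (dp : is_density mu p) (dq : is_density mu q).
Hypothesis supp_pq : supp p `<=` supp q.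
Hypotheses (mc : measurable_fun setT c) (c_ge0 : forall y, 0 <= c y).
Hypothesis c_le : forall y, c y <= B.

Let p_ge0 y : 0 <= p y. Proof. by case: dp. Qed.
Let q_ge0 y : 0 <= q y. Proof. by case: dq. Qed.
Let mp : measurable_fun setT p. Proof. by case: dp. Qed.
Let mq : measurable_fun setT q. Proof. by case: dq. Qed.
Let ip := density_integrable dp.
Let iq := density_integrable dq.

Lemma mul_ln_ratio y : p y * ln (Defs.ratio p q c y) = p y * ln (p y / q y) + p y * c y.
Proof.
have := p_ge0 y; rewrite le0r => /orP[/eqP ->|py]; first by rewrite !mul0r addr0.
have qy : 0 < q y := supp_pq py.
by rewrite /Defs.ratio mulrAC [ln (_ * expR _)]lnM ?posrE ?divr_gt0 ?expR_gt0 // expRK mulrDr.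
Qed.

Lemma measurable_ratio : measurable_fun setT (Defs.ratio p q c).
Proof.
apply: measurable_funM; last exact: measurable_inv_ge0.
by apply: measurable_funM => //; exact: measurableT_comp mc.
Qed.

Lemma integrable_mul_cost : mu.-integrable setT (EFin \o (fun y => p y * c y)).
Proof.
have B0 : 0 <= B := le_trans (c_ge0 point) (c_le point).
apply: (le_integrable measurableT) (integrableZl measurableT B ip) => [|y _].
  exact/measurable_EFinP/measurable_funM.
by rewrite /= lee_fin !ger0_norm ?mulr_ge0 // mulrC ler_wpM2r.
Qed.

Lemma integrable_mul_ln_div (g : T -> R) : mu.-integrable setT (EFin \o g) ->
  (forall y, p y * ln (Defs.ratio p q c y) <= g y) ->
  mu.-integrable setT (EFin \o (fun y => p y * ln (p y / q y))).
Proof.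
move=> ig g_ge.
have bound_abs := integrableD measurableT
  (integrable_norm (integrableB measurableT ig integrable_mul_cost))
  (integrable_norm (integrableB measurableT ip iq)).
apply: (le_integrable measurableT) bound_abs => [|y _].
  apply/measurable_EFinP/measurable_funM => //; apply: measurableT_comp => //.
  exact/measurable_funM/measurable_inv_ge0.
have lo := subr_le_mul_ln_div (p_ge0 y) (q_ge0 y) (@supp_pq y).
have hi := g_ge y; rewrite mul_ln_ratio in hi.
rewrite /= lee_fin [leRHS]ger0_norm ?addr_ge0 //.
have := ler_norm (g y - p y * c y); have := normr_ge0 (g y - p y * c y).
have := ler_norm (q y - p y); have := normr_ge0 (p y - q y).
rewrite distrC ler_norml; lra.
Qed.

Lemma KL_expect_le_integral (g : T -> R) : mu.-integrable setT (EFin \o g) ->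
  (forall y, p y * ln (Defs.ratio p q c y) <= g y) ->
  exists k e, [/\ KL mu p q = k%:E, expect mu p c = e%:E, 0 <= k, 0 <= e &
    ((k + e)%:E <= \int[mu]_y (g y)%:E)%E].
Proof.
move=> ig g_ge; have iKL := integrable_mul_ln_div ig g_ge.
have KLfin : KL mu p q \is a fin_num := integrable_fin_num measurableT iKL.
have Efin : expect mu p c \is a fin_num :=
  integrable_fin_num measurableT integrable_mul_cost.
exists (fine (KL mu p q)), (fine (expect mu p c)).
rewrite -!lee_fin EFinD !fineK //; split => //.
- have [_ _ p1] := dp; have [_ _ q1] := dq.
  have : (\int[mu]_y ((p y)%:E - (q y)%:E) <= KL mu p q)%E.
    apply: le_integral => // [|y _]; first exact: integrableB.
    by rewrite lee_fin; exact: subr_le_mul_ln_div (p_ge0 y) (q_ge0 y) (@supp_pq y).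
  by rewrite integralB_EFin // p1 q1 subee.
- by apply: integral_ge0 => y _; rewrite lee_fin mulr_ge0.
- have : (\int[mu]_y ((p y * ln (p y / q y))%:E + (p y * c y)%:E)
      <= \int[mu]_y (g y)%:E)%E.
    apply: le_integral => // [|y _]; first exact: (integrableD measurableT iKL integrable_mul_cost).
    by rewrite -EFinD lee_fin -mul_ln_ratio.
  by rewrite (integralD_EFin measurableT iKL integrable_mul_cost).
Qed.

Lemma KL_expect_le_Vtilde0 (eta M : R) : Vtilde mu p q c eta 0 = M%:E ->
  exists k e, [/\ KL mu p q = k%:E, expect mu p c = e%:E, 0 <= k, 0 <= e & k + e <= M].
Proof.
rewrite /Vtilde eqxx => supM.
have iMp : mu.-integrable setT (EFin \o (fun y => M * p y)) := integrableZl measurableT M ip.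
have Mp_ge y : p y * ln (Defs.ratio p q c y) <= M * p y.
  have := p_ge0 y; rewrite le0r => /orP[/eqP ->|py]; first by rewrite mul0r mulr0.
  rewrite mulrC ler_wpM2r // -lee_fin -supM.
  by apply: ereal_sup_ubound; exists y.
have [k [e [KLk Ee k0 e0]]] := KL_expect_le_integral iMp Mp_ge.
have [_ _ p1] := dp.
under eq_integral do rewrite EFinM.
by rewrite integralZl // p1 mule1 lee_fin => ke; exists k, e.
Qed.

Lemma Vtilde_gt0E (eta a v : R) : 0 < a -> Vtilde mu p q c eta a = v%:E ->
  exists2 z, 0 < z & expect mu p (fun y => Defs.ratio p q c y `^ a^-1) = z%:E /\
    v = a * ln z + a * eta.
Proof.
move=> a0; rewrite /Vtilde gt_eqF //.
have : (0 <= expect mu p (fun y => (Defs.ratio p q c y `^ a^-1)%R))%E.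
  by apply: integral_ge0 => y _; rewrite lee_fin mulr_ge0 ?powR_ge0.
case: (expect _ _ _) => [z| |] //= z_ge0; last by rewrite gt0_muley.
have [z0|_] := ltP 0 z; last by rewrite gt0_muleNy.
by rewrite -EFinM -EFinD => -[<-]; exists z.
Qed.

Lemma KL_expect_le_Vtilde_gt0 (eta a v : R) : 0 < a -> 0 <= eta ->
  Vtilde mu p q c eta a = v%:E ->
  exists k e, [/\ KL mu p q = k%:E, expect mu p c = e%:E, 0 <= k, 0 <= e & k + e <= v].
Proof.
move=> a0 eta0 /(Vtilde_gt0E a0) [z z0 [Zz ->]].
pose pr y := p y * Defs.ratio p q c y `^ a^-1.
have prz : (\int[mu]_y (pr y)%:E = z%:E)%E := Zz.
have ipr : mu.-integrable setT (EFin \o pr).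
  apply/integrableP; split.
    apply/measurable_EFinP/measurable_funM => //.
    exact: measurableT_comp (measurable_powR _) measurable_ratio.
  under eq_integral do rewrite /= ger0_norm ?mulr_ge0 ?powR_ge0 //.
  by rewrite prz ltry.
pose g y := a * (ln z - 1) * p y + a / z * pr y.
have ig : mu.-integrable setT (EFin \o g) :=
  integrableD measurableT (integrableZl measurableT _ ip) (integrableZl measurableT _ ipr).
have g_ge y : p y * ln (Defs.ratio p q c y) <= g y.
  have := p_ge0 y; rewrite le0r => /orP[/eqP py0|py].
    by rewrite /g /pr py0 !(mul0r, mulr0, addr0).
  have r0 : 0 < Defs.ratio p q c y.
    by rewrite divr_gt0 ?mulr_gt0 ?expR_gt0 //; exact: supp_pq.
  have := ler_wpM2l (p_ge0 y) (ln_le_powR_div a0 r0 z0).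
  rewrite /g /pr; lra.
have [k [e [KLk Ee k0 e0]]] := KL_expect_le_integral ig g_ge.
have int_g : (\int[mu]_y (g y)%:E = (a * (ln z - 1))%:E * \int[mu]_y (p y)%:E
    + (a / z)%:E * \int[mu]_y (pr y)%:E)%E.
  by rewrite -!integralZl // -integralD //; exact: integrableZl.
have [_ _ p1] := dp.
rewrite int_g p1 prz mule1 -EFinM -EFinD lee_fin => ke; exists k, e; split => //.
have : a / z * z = a by rewrite divfK // gt_eqF.
have : 0 <= a * eta by rewrite mulr_ge0 // ltW.
lra.
Qed.

Lemma KL_expect_le_attained_Vtilde (eta v : R) : 0 <= eta ->
  (exists2 a, 0 <= a & Vtilde mu p q c eta a = v%:E) ->
  exists k e, [/\ KL mu p q = k%:E, expect mu p c = e%:E, 0 <= k, 0 <= e & k + e <= v].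
Proof.
move=> eta0 [a]; rewrite le0r => /orP[/eqP ->|a0]; first exact: KL_expect_le_Vtilde0.
exact: KL_expect_le_Vtilde_gt0.
Qed.

End KL_bound.

Lemma expeR_weight_bounds {R : realType} (w k e eta v c : R) :
  0 <= w -> 0 <= k -> 0 <= e -> 0 <= c -> k + e <= v -> 0 < eta ->
  let F := (w%:E * expeR (- k%:E - e%:E - c%:E))%E in
  let G := (w%:E * expeR (- eta%:E - v%:E - c%:E))%E in
  [/\ (0 <= G)%E, (G <= F)%E, (F <= w%:E)%E & (0 < w -> (G < F)%E)].
Proof.
move=> w0 k0 e0 c0 kev eta0 /=; rewrite -!EFinM !lee_fin lte_fin.
split.
- by rewrite mulr_ge0 ?expR_ge0.
- by rewrite ler_wpM2l // ler_expR; lra.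
- by rewrite -[leRHS]mulr1 ler_wpM2l // -expR0 ler_expR; lra.
- by move=> w_gt0; rewrite ltr_pM2l // ltr_expR; lra.
Qed.

Theorem lemma5 (R : realType)
  (dX : measure_display) (X : measurableType dX) (muX : {measure set X -> \bar R})
  (dU : measure_display) (U : measurableType dU) (muU : {measure set U -> \bar R})
  (qu : X -> U -> R)              (* q(u_k | x_{k-1}) *)
  (pbar : X -> U -> X -> R)       (* pbar(x_k | x_{k-1}, u_k) *)
  (qx : X -> U -> X -> R)         (* q(x_k | x_{k-1}, u_k) *)
  (eta : X -> U -> R)             (* eta_k(x_{k-1}, u_k) *)
  (cbar : X -> R) (cu : U -> R)   (* state cost, action cost c^(u)_k *)
  (ctilde : X -> U -> R) :
  (forall x, is_density muU (qu x)) ->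
  (forall x u, is_density muX (pbar x u)) ->
  (forall x u, is_density muX (qx x u)) ->
  (exists B : R, forall x u y, qx x u y <= B) ->
  (forall x u, supp (pbar x u) `<=` supp (qx x u)) ->
  (forall x u, 0 < eta x u) ->
  (exists B : R, forall x u, eta x u <= B) ->
  (forall y, 0 <= cbar y) -> (exists B : R, forall y, cbar y <= B) ->
  measurable_fun setT cbar ->
  (forall u, 0 <= cu u) -> (exists B : R, forall u, B <= cu u) ->
  (* ctilde = min_{alpha >= 0} Vtilde_alpha *)
  (forall x u, is_min_Vtilde muX (pbar x u) (qx x u) cbar (eta x u) (ctilde x u)) ->
  (* measurability of the integrands in u_k *)
  (forall x, measurable_fun [set: U] (fun u : U => ((qu x u)%:E *
      expeR (- KL muX (pbar x u) (qx x u) - expect muX (pbar x u) cbar - (cu u)%:E))%E)) ->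
  (forall x, measurable_fun [set: U] (fun u : U =>
      ((qu x u)%:E * expeR (- (eta x u)%:E - (ctilde x u)%:E - (cu u)%:E))%E)) ->
  forall xprev : X,
  (- lne (\int[muU]_u ((qu xprev u)%:E *
      expeR (- KL muX (pbar xprev u) (qx xprev u)
             - expect muX (pbar xprev u) cbar - (cu u)%:E)))
   < - lne (\int[muU]_u ((qu xprev u)%:E *
      expeR (- (eta xprev u)%:E - (ctilde xprev u)%:E - (cu u)%:E))))%E.
Proof.
move=> dqu dp dqx _ supp_pq eta_gt0 _ cbar_ge0 [B cbar_le] mcbar cu_ge0 _ ctilde_min mF mG x.
rewrite lteN2; apply: lne_integral_lt (dqu x) (mF x) (mG x) _ => u /=.
have [k [e [-> -> k_ge0 e_ge0 ke_le]]] := KL_expect_le_attained_Vtilde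
  (dp x u) (dqx x u) (supp_pq x u) mcbar cbar_ge0 cbar_le (ltW (eta_gt0 x u))
  (ctilde_min x u).1.
have [qu_ge0 _ _] := dqu x.
exact: expeR_weight_bounds (qu_ge0 u) k_ge0 e_ge0 (cu_ge0 u) ke_le (eta_gt0 x u).
Qed.
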